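(* Let $\mathfrak{A}$ be an atomic weakly associative relation algebra. Let $B=\{s\in{}^3\mathrm{At}(\mathfrak{A}): s_2;s_0\ge s_1\}$ and, for $\{\kappa,\lambda,\mu\}=\{0,1,2\}$, let $T_\kappa=\{\langle s,t\rangle\in B\times B:s_\kappa=t_\kappa\}$, $E_{\kappa\kappa}=B$, and $E_{\kappa\lambda}=E_{\lambda\kappa}=\{s\in B:s_\mu\le1'\}$. Then $\mathfrak{B}=\langle B,T_\kappa,E_{\kappa\lambda}\rangle_{\kappa,\lambda<3}$ is a suitable structure.
   Context: WA: algebras $\langle A,+,\overline{\phantom{x}},;,\breve{\phantom{x}},1'\rangle$ with $x\cdot y=\overline{\overline{x}+\overline{y}}$, $0'=\overline{1'}$, $1=1'+0'$, $0=\overline{1}$, satisfying for all $x,y,z$: $x+y=y+x$; $x+(y+z)=(x+y)+z$; $\overline{\overline{x}+\overline{y}}+\overline{\overline{x}+y}=x$; $((x\cdot 1');1);1=(x\cdot1');1$; $(x+y);z=x;z+y;z$; $x;1'=x$; $\breve{\breve{x}}=x$; $\breve{(x+y)}=\breve{x}+\breve{y}$; $\breve{(x;y)}=\breve{y};\breve{x}$; $\breve{x};\overline{x;y}+\overline{y}=\overline{y}$. $\mathrm{At}(\mathfrak{A})$ = set of atoms; triples are $s=\langle s_0,s_1,s_2\rangle$. A structure $\langle B,T_\kappa,E_{\kappa\lambda}\rangle_{\kappa,\lambda<\alpha}$ ($\alpha$ a nonzero ordinal) is a suitable structure if for all $\kappa,\lambda,\mu<\alpha$: (i) $T_\kappa\subseteq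 B\times B$ and $E_{\kappa\lambda}\subseteq B$; (ii) $T_\kappa$ is an equivalence relation on $B$; (iii) $E_{\kappa\kappa}=B$; (iv) $E_{\kappa\lambda}=T_\mu^*(E_{\kappa\mu}\cap E_{\mu\lambda})$ whenever $\kappa\ne\mu\ne\lambda$, where $T_\mu^*(X)=\{y:\exists x\in X\ \langle y,x\rangle\in T_\mu\}$; (v) $T_\kappa\cap(E_{\kappa\lambda}\times E_{\kappa\lambda})\subseteq Id$ (the identity relation) whenever $\kappa\ne\lambda$. *)

Section WAdefs.
Context {A : Type}
  (add : A -> A -> A)
  (cmp : A -> A)
  (comp : A -> A -> A)
  (conv : A -> A)
  (idr : A).

Definition meet (x y : A) : A := cmp (add (cmp x) (cmp y)).
Definition diver : A := cmp idr.
Definition top : A := add idr diver.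
Definition bot : A := cmp top.
Definition le (x y : A) : Prop := add x y = y.

Definition is_WA : Prop :=
  (forall x y, add x y = add y x) /\
  (forall x y z, add x (add y z) = add (add x y) z) /\
  (forall x y, add (cmp (add (cmp x) (cmp y))) (cmp (add (cmp x) y)) = x) /\
  (forall x, comp (comp (meet x idr) top) top = comp (meet x idr) top) /\
  (forall x y z, comp (add x y) z = add (comp x z) (comp y z)) /\
  (forall x, comp x idr = x) /\
  (forall x, conv (conv x) = x) /\
  (forall x y, conv (add x y) = add (conv x) (conv y)) /\
  (forall x y, conv (comp x y) = comp (conv y) (conv x)) /\
  (forall x y, add (comp (conv x) (cmp (comp x y))) (cmp y) = cmp y).

Definition is_atom (a : A) : Prop :=
  a <> bot /\ forall y, le y a -> y = bot \/ y = a.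

Definition atomic : Prop :=
  forall x, x <> bot -> exists a, is_atom a /\ le a x.

End WAdefs.

(* Suitable structures <B, T_k, E_kl>_{k,l < alpha}, with the index set
   alpha given as a type I; the carrier B is a subset (predicate) of a type X. *)
Definition suitable {X I : Type} (B : X -> Prop) (T : I -> X -> X -> Prop)
  (E : I -> I -> X -> Prop) : Prop :=
  (forall k x y, T k x y -> B x /\ B y) /\
  (forall k l x, E k l x -> B x) /\
  (forall k x, B x -> T k x x) /\
  (forall k x y, T k x y -> T k y x) /\
  (forall k x y z, T k x y -> T k y z -> T k x z) /\
  (forall k x, E k k x <-> B x) /\
  (forall k l m, k <> m -> m <> l ->
     forall y, E k l y <-> exists x, E k m x /\ E m l x /\ T m y x) /\
  (forall k l, k <> l ->
     forall x y, T k x y -> E k l x -> E k l y -> x = y).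

Inductive idx3 : Type := i0 | i1 | i2.

Definition triple (A : Type) : Type := (A * A * A)%type.
Definition comp3 {A : Type} (s : triple A) (k : idx3) : A :=
  match s with (a, b, c) => match k with i0 => a | i1 => b | i2 => c end end.

Section Bstruct.
Context {A : Type} (add : A -> A -> A) (cmp : A -> A) (comp : A -> A -> A)
  (conv : A -> A) (idr : A).

Definition Bset (s : triple A) : Prop :=
  is_atom add cmp idr (comp3 s i0) /\ is_atom add cmp idr (comp3 s i1) /\
  is_atom add cmp idr (comp3 s i2) /\
  le add (comp3 s i1) (comp (comp3 s i2) (comp3 s i0)).

Definition Trel (k : idx3) (s t : triple A) : Prop :=
  Bset s /\ Bset t /\ comp3 s k = comp3 t k.

Definition Eset (k l : idx3) (s : triple A) : Prop :=
  Bset s /\ (k = l \/ forall m, m <> k -> m <> l -> le add (comp3 s m) idr).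
End Bstruct.

(** Huntington's axioms make the additive reduct a Boolean algebra.  Call an
    atom [e <= 1'] a subidentity atom.  By atomicity and the Peircean law
    every atom [a] has a subidentity atom [e] with [a <= e ; a] (and one with
    [a <= a ; e]), and weak associativity, in the form
    [(e ; 1) ; 1 = e ; 1], makes it unique.
    Hence a triple of [B] with a subidentity component has one of the shapes
    [(e, a, a)], [(a, e, conv a)], [(a, a, e)], and is determined by either of its
    other two components: this is condition (v), and condition (iv) follows by
    choosing the subidentity atoms that complete a given atom to such a triple. *)

From Pilot Require Import Defs.
From Stdlib Require Import Setoid.

Lemma idx3_eq_dec (k l : idx3) : {k = l} + {k <> l}.
Proof. decide equality. Qed.

Lemma idx3_third (k l : idx3) : k <> l -> exists m, m <> k /\ m <> l.
Proof.
  destruct k, l; intro hkl; try congruence;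
    [exists i2 | exists i1 | exists i2 | exists i0 | exists i1 | exists i0];
    split; discriminate.
Qed.

Section BooleanAlgebra.

Variables (A : Type) (add : A -> A -> A) (cmp : A -> A).
Hypothesis addC : forall x y, add x y = add y x.
Hypothesis addA : forall x y z, add x (add y z) = add (add x y) z.
Hypothesis huntington :
  forall x y, add (cmp (add (cmp x) (cmp y))) (cmp (add (cmp x) y)) = x.

Local Infix "⊕" := add (at level 50, left associativity).
Local Infix "⊑" := (le add) (at level 70).
Local Notation top := (Defs.top add cmp).
Local Notation bot := (Defs.bot add cmp).
Local Notation meet := (Defs.meet add cmp).
Local Notation is_atom := (Defs.is_atom add cmp).

Lemma addCA x y z : x ⊕ (y ⊕ z) = y ⊕ (x ⊕ z).
Proof. rewrite !addA, (addC x y). reflexivity. Qed.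

Lemma addACA a b c d : (a ⊕ b) ⊕ (c ⊕ d) = (a ⊕ c) ⊕ (b ⊕ d).
Proof. rewrite <- !addA, (addCA b c). reflexivity. Qed.

(* Expand [x] and [cmp x] by [huntington] with second argument [cmp (cmp x)];
   the four summands regroup into the expansions of [cmp x] and [cmp (cmp x)]
   with second argument [cmp x]. *)
Lemma add_cmp_shift x : x ⊕ cmp x = cmp x ⊕ cmp (cmp x).
Proof.
  transitivity ((cmp (cmp x ⊕ cmp (cmp (cmp x))) ⊕ cmp (cmp x ⊕ cmp (cmp x)))
              ⊕ (cmp (cmp (cmp x) ⊕ cmp (cmp (cmp x))) ⊕ cmp (cmp (cmp x) ⊕ cmp (cmp x)))).
  { rewrite (huntington x (cmp (cmp x))), (huntington (cmp x) (cmp (cmp x))). reflexivity. }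
  rewrite addACA, addC, (addC (cmp (cmp x ⊕ cmp (cmp x)))),
    (addC (cmp (cmp x ⊕ cmp (cmp (cmp x))))).
  rewrite (addC (cmp x) (cmp (cmp x))), (addC (cmp (cmp x)) (cmp (cmp (cmp x)))),
    (addC (cmp x) (cmp (cmp (cmp x)))).
  rewrite (huntington (cmp x) (cmp x)), (huntington (cmp (cmp x)) (cmp x)). apply addC.
Qed.

Lemma cmpK x : cmp (cmp x) = x.
Proof.
  rewrite <- (huntington (cmp (cmp x)) (cmp x)) at 1.
  rewrite (addC (cmp (cmp (cmp x))) (cmp (cmp x))), <- add_cmp_shift.
  rewrite (addC (cmp (cmp (cmp x))) (cmp x)), addC. apply huntington.
Qed.

Lemma add_cmp_indep x y : x ⊕ cmp x = y ⊕ cmp y.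
Proof.
  assert (hx : cmp (x ⊕ cmp y) ⊕ cmp (x ⊕ y) = cmp x).
  { rewrite <- (huntington (cmp x) y), cmpK. reflexivity. }
  assert (hy : cmp (y ⊕ cmp x) ⊕ cmp (y ⊕ x) = cmp y).
  { rewrite <- (huntington (cmp y) x), cmpK. reflexivity. }
  transitivity ((cmp (cmp x ⊕ cmp y) ⊕ cmp (cmp x ⊕ y))
                ⊕ (cmp (x ⊕ cmp y) ⊕ cmp (x ⊕ y))).
  { rewrite huntington, hx. reflexivity. }
  transitivity ((cmp (cmp y ⊕ cmp x) ⊕ cmp (cmp y ⊕ x))
                ⊕ (cmp (y ⊕ cmp x) ⊕ cmp (y ⊕ x))).
  2: { rewrite huntington, hy. reflexivity. }
  rewrite (addC (cmp y) (cmp x)), (addC (cmp y) x), (addC y (cmp x)), (addC y x).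
  apply addACA.
Qed.

Lemma add_cmp u x : x ⊕ cmp x = top u.
Proof. exact (add_cmp_indep x u). Qed.

Lemma cmp_bot u : cmp (bot u) = top u.
Proof. apply cmpK. Qed.

Lemma bot_add_top u : bot u ⊕ top u = top u.
Proof. rewrite <- (cmp_bot u) at 1. apply add_cmp. Qed.

Lemma cmp_bot_add u x : cmp x = bot u ⊕ cmp (x ⊕ x).
Proof.
  rewrite <- (huntington (cmp x) x) at 1.
  rewrite cmpK, (add_cmp u). reflexivity.
Qed.

Lemma top_add u x : top u ⊕ x = top u.
Proof.
  rewrite <- (add_cmp u x) at 1.
  rewrite (addC x), <- addA, (cmp_bot_add u x), <- addA.
  rewrite <- (cmpK (x ⊕ x)) at 2. rewrite (add_cmp u). apply bot_add_top.
Qed.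

Lemma add_top u x : x ⊕ top u = top u.
Proof. rewrite addC. apply top_add. Qed.

Lemma bot_add_bot u : bot u ⊕ bot u = bot u.
Proof.
  rewrite <- (huntington (bot u) (bot u)) at 3.
  rewrite cmp_bot, !top_add. reflexivity.
Qed.

Lemma bot_add_meet u x : bot u ⊕ cmp (cmp x ⊕ cmp x) = x.
Proof.
  symmetry. rewrite <- (huntington x (cmp x)) at 1.
  rewrite (add_cmp u (cmp x)). reflexivity.
Qed.

Lemma add_bot u x : x ⊕ bot u = x.
Proof.
  rewrite <- (bot_add_meet u x) at 1.
  rewrite (addC (bot u)), <- addA, bot_add_bot, addC. apply bot_add_meet.
Qed.

Lemma bot_add u x : bot u ⊕ x = x.
Proof. rewrite addC. apply add_bot. Qed.

Lemma addxx x : x ⊕ x = x.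
Proof.
  pose proof (bot_add_meet x (cmp x)) as h. rewrite cmpK, bot_add in h.
  rewrite <- (cmpK (x ⊕ x)), h. apply cmpK.
Qed.

Lemma le_refl x : x ⊑ x.
Proof. apply addxx. Qed.

Lemma le_trans x y z : x ⊑ y -> y ⊑ z -> x ⊑ z.
Proof. unfold le. intros hxy hyz. rewrite <- hyz, addA, hxy. reflexivity. Qed.

Lemma le_antisym x y : x ⊑ y -> y ⊑ x -> x = y.
Proof. unfold le. intros hxy hyx. rewrite <- hxy, addC. symmetry. exact hyx. Qed.

Lemma bot_le u x : bot u ⊑ x.
Proof. apply bot_add. Qed.

Lemma le_top u x : x ⊑ top u.
Proof. apply add_top. Qed.

Lemma le_add_l x y : x ⊑ x ⊕ y.
Proof. unfold le. rewrite addA, addxx. reflexivity. Qed.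

Lemma le_add_r x y : y ⊑ x ⊕ y.
Proof. rewrite addC. apply le_add_l. Qed.

Lemma cmp_le x y : x ⊑ y -> cmp y ⊑ cmp x.
Proof.
  unfold le. intro hxy.
  pose proof (huntington (cmp x) y) as h. rewrite cmpK, hxy in h.
  rewrite <- h, addCA, addxx. reflexivity.
Qed.

Lemma le_cmp_eq_bot u x : x ⊑ cmp x -> x = bot u.
Proof.
  unfold le. intro h. rewrite (add_cmp u) in h.
  rewrite <- (cmpK x), <- h. reflexivity.
Qed.

Lemma meet_le_l x y : meet x y ⊑ x.
Proof. rewrite <- (cmpK x) at 2. apply cmp_le, le_add_l. Qed.

Lemma meet_le_r x y : meet x y ⊑ y.
Proof. rewrite <- (cmpK y) at 2. apply cmp_le, le_add_r. Qed.

Lemma meet_eq_bot u x y : meet x y = bot u -> x ⊑ cmp y.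
Proof.
  intro h. pose proof (huntington x y) as hx.
  unfold Defs.meet in h. rewrite h, bot_add in hx.
  rewrite <- hx. apply cmp_le, le_add_r.
Qed.

Lemma meet_idPl x y : x ⊑ y -> meet x y = x.
Proof.
  intro hxy. apply cmp_le in hxy. unfold le in hxy. unfold Defs.meet.
  rewrite addC, hxy. apply cmpK.
Qed.

Lemma atom_neq_bot u a : is_atom u a -> a <> bot u.
Proof. intros [h _]. exact h. Qed.

Lemma atom_le_eq u x a : x ⊑ a -> x <> bot u -> is_atom u a -> x = a.
Proof. intros hxa hx [_ ha]. destruct (ha x hxa); [contradiction | assumption]. Qed.

Lemma atom_split u a y : is_atom u a -> a ⊑ y \/ a ⊑ cmp y.
Proof.
  intros [_ ha]. destruct (ha _ (meet_le_l a y)) as [h | h].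
  - right. exact (meet_eq_bot u a y h).
  - left. rewrite <- h. apply meet_le_r.
Qed.

Section WeaklyAssociative.

Variables (comp : A -> A -> A) (conv : A -> A) (idr : A).

Local Infix "⨾" := comp (at level 40, left associativity).
Local Notation one := (top idr).
Local Notation zero := (bot idr).
Local Notation atom := (is_atom idr).

Hypothesis comp_top_top : forall x, meet x idr ⨾ one ⨾ one = meet x idr ⨾ one.
Hypothesis comp_addl : forall x y z, (x ⊕ y) ⨾ z = x ⨾ z ⊕ y ⨾ z.
Hypothesis comp_id_r : forall x, x ⨾ idr = x.
Hypothesis convK : forall x, conv (conv x) = x.
Hypothesis conv_add : forall x y, conv (x ⊕ y) = conv x ⊕ conv y.
Hypothesis conv_comp : forall x y, conv (x ⨾ y) = conv y ⨾ conv x.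
Hypothesis tarski : forall x y, conv x ⨾ cmp (x ⨾ y) ⊑ cmp y.

Lemma comp_monol x y z : x ⊑ y -> x ⨾ z ⊑ y ⨾ z.
Proof. unfold le. intro h. rewrite <- comp_addl, h. reflexivity. Qed.

Lemma conv_mono x y : x ⊑ y -> conv x ⊑ conv y.
Proof. unfold le. intro h. rewrite <- conv_add, h. reflexivity. Qed.

Lemma comp_addr z x y : z ⨾ (x ⊕ y) = z ⨾ x ⊕ z ⨾ y.
Proof.
  rewrite <- (convK (z ⨾ (x ⊕ y))), conv_comp, conv_add, comp_addl, conv_add.
  rewrite !conv_comp, !convK. reflexivity.
Qed.

Lemma comp_monor z x y : x ⊑ y -> z ⨾ x ⊑ z ⨾ y.
Proof. unfold le. intro h. rewrite <- comp_addr, h. reflexivity. Qed.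

Lemma conv_id : conv idr = idr.
Proof.
  assert (h : conv (conv idr ⨾ idr) = conv idr ⨾ idr)
    by (rewrite conv_comp, convK; reflexivity).
  rewrite comp_id_r, convK in h. symmetry. exact h.
Qed.

Lemma comp_id_l x : idr ⨾ x = x.
Proof. rewrite <- (convK x) at 1. rewrite <- conv_id, <- conv_comp, comp_id_r. apply convK. Qed.

Lemma comp_subid_l e x : e ⊑ idr -> e ⨾ x ⊑ x.
Proof. intro he. rewrite <- (comp_id_l x) at 2. apply comp_monol, he. Qed.

Lemma comp_subid_r e x : e ⊑ idr -> x ⨾ e ⊑ x.
Proof. intro he. rewrite <- (comp_id_r x) at 2. apply comp_monor, he. Qed.

Lemma conv_bot : conv zero = zero.
Proof.
  apply le_antisym; [| apply bot_le].
  rewrite <- (convK zero) at 2. apply conv_mono, bot_le.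
Qed.

Lemma conv_neq_bot x : x <> zero -> conv x <> zero.
Proof. intros hx h. apply hx. rewrite <- (convK x), h. apply conv_bot. Qed.

Lemma atom_conv a : atom a -> atom (conv a).
Proof.
  intros [ha0 ha]. split; [exact (conv_neq_bot a ha0) |].
  intros y hy. apply conv_mono in hy. rewrite convK in hy.
  destruct (ha _ hy) as [h | h]; [left | right];
    rewrite <- (convK y), h; [apply conv_bot | reflexivity].
Qed.

Lemma peirce_bot c x y : c ⊑ x ⨾ y -> y ⊑ cmp (conv x ⨾ c) -> c = zero.
Proof.
  intros hc hy. apply le_cmp_eq_bot.
  apply (le_trans _ _ _ hc), (le_trans _ _ _ (comp_monor x _ _ hy)).
  rewrite <- (convK x) at 1. apply tarski.
Qed.

Lemma conv_comp_neq_bot c x y : c ⊑ x ⨾ y -> c <> zero -> conv x ⨾ c <> zero.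
Proof.
  intros hc hc0 h. apply hc0, (peirce_bot c x y hc).
  rewrite h, cmp_bot. apply le_top.
Qed.

Lemma atom_le_conv_comp c x b : c ⊑ x ⨾ b -> c <> zero -> atom b -> b ⊑ conv x ⨾ c.
Proof.
  intros hc hc0 hb. destruct (atom_split idr b (conv x ⨾ c) hb) as [h | h]; [exact h |].
  contradiction (hc0 (peirce_bot c x b hc h)).
Qed.

Lemma atom_le_comp_conv c a y : c ⊑ a ⨾ y -> c <> zero -> atom a -> a ⊑ c ⨾ conv y.
Proof.
  intros hc hc0 ha. apply conv_mono in hc. rewrite conv_comp in hc.
  pose proof (atom_le_conv_comp _ _ _ hc (conv_neq_bot c hc0) (atom_conv a ha)) as h.
  apply conv_mono in h. rewrite conv_comp, !convK in h. exact h.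
Qed.

Definition subid_atom e := atom e /\ e ⊑ idr.

Lemma subid_atom_eq e e' : subid_atom e -> subid_atom e' -> e ⨾ e' <> zero -> e = e'.
Proof.
  intros [he hei] [he' hei'] h.
  rewrite <- (atom_le_eq _ _ _ (comp_subid_r e' e hei') h he).
  exact (atom_le_eq _ _ _ (comp_subid_l e e' hei) h he').
Qed.

Lemma conv_subid_atom e : subid_atom e -> conv e = e.
Proof.
  intros [he hei]. apply subid_atom_eq; try split; auto.
  - apply atom_conv, he.
  - rewrite <- conv_id. apply conv_mono, hei.
  - apply conv_comp_neq_bot with idr; [| exact (atom_neq_bot _ _ he)].
    rewrite comp_id_r. apply le_refl.
Qed.

Lemma comp_subid_top_top e : e ⊑ idr -> e ⨾ one ⨾ one = e ⨾ one.
Proof. intro hei. rewrite <- (meet_idPl e idr hei). apply comp_top_top. Qed.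

(* Weak associativity is used exactly here:
   [a <= e' ; 1] forces [e' <= (e ; 1) ; 1 = e ; 1]. *)
Lemma left_unit_unique a e e' :
  atom a -> subid_atom e -> subid_atom e' -> a ⊑ e ⨾ a -> a ⊑ e' ⨾ a -> e = e'.
Proof.
  intros ha [he hei] [he' hei'] hea he'a.
  assert (hae : a ⊑ e ⨾ one) by (apply (le_trans _ _ _ hea), comp_monor, le_top).
  assert (hae' : a ⊑ e' ⨾ one) by (apply (le_trans _ _ _ he'a), comp_monor, le_top).
  assert (he'e : e' ⊑ e ⨾ one).
  { apply (le_trans _ _ _ (atom_le_comp_conv _ _ _ hae' (atom_neq_bot _ _ ha) he')).
    rewrite <- (comp_subid_top_top e hei).
    apply (le_trans _ (e ⨾ one ⨾ conv one));
      [apply comp_monol, hae | apply comp_monor, le_top]. }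
  apply subid_atom_eq; try split; auto.
  rewrite <- (conv_subid_atom e) by (split; assumption).
  exact (conv_comp_neq_bot _ _ _ he'e (atom_neq_bot _ _ he')).
Qed.

Lemma right_unit_unique a e e' :
  atom a -> subid_atom e -> subid_atom e' -> a ⊑ a ⨾ e -> a ⊑ a ⨾ e' -> e = e'.
Proof.
  intros ha he he' hae hae'.
  apply conv_mono in hae, hae'. rewrite conv_comp in hae, hae'.
  rewrite (conv_subid_atom e he) in hae. rewrite (conv_subid_atom e' he') in hae'.
  exact (left_unit_unique _ _ _ (atom_conv a ha) he he' hae hae').
Qed.

Lemma le_subid_comp_l c e a : c <> zero -> e ⊑ idr -> atom a -> c ⊑ e ⨾ a -> c = a.
Proof.
  intros hc hei ha h.
  exact (atom_le_eq _ _ _ (le_trans _ _ _ h (comp_subid_l _ _ hei)) hc ha).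
Qed.

Lemma le_subid_comp_r c a e : c <> zero -> e ⊑ idr -> atom a -> c ⊑ a ⨾ e -> c = a.
Proof.
  intros hc hei ha h.
  exact (atom_le_eq _ _ _ (le_trans _ _ _ h (comp_subid_r _ _ hei)) hc ha).
Qed.

Lemma subid_atom_le_comp e b a :
  subid_atom e -> atom b -> atom a -> e ⊑ b ⨾ a -> b = conv a /\ conv a ⊑ e ⨾ conv a.
Proof.
  intros [he hei] hb ha h.
  pose proof (atom_le_conv_comp _ _ _ h (atom_neq_bot _ _ he) ha) as hab.
  assert (hb_conv : b = conv a).
  { rewrite <- (convK b). f_equal. symmetry.
    exact (atom_le_eq _ _ _ (le_trans _ _ _ hab (comp_subid_r _ _ hei))
                      (atom_neq_bot _ _ ha) (atom_conv b hb)). }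
  split; [exact hb_conv |]. rewrite hb_conv in h.
  exact (atom_le_comp_conv _ _ _ h (atom_neq_bot _ _ he) (atom_conv a ha)).
Qed.

Local Notation Bs := (Bset add cmp comp idr).
Local Notation Tr := (Trel add cmp comp idr).
Local Notation Es := (Eset add cmp comp idr).

Lemma Bset_atom s k : Bs s -> atom (comp3 s k).
Proof. destruct s as [[s0 s1] s2]. intros (h0 & h1 & h2 & _). destruct k; assumption. Qed.

Lemma Bset_intro a b c : atom a -> atom b -> atom c -> b ⊑ c ⨾ a -> Bs (a, b, c).
Proof. intros ha hb hc h. exact (conj ha (conj hb (conj hc h))). Qed.

Lemma Bset_subid_0 e b c : Bs (e, b, c) -> e ⊑ idr -> b = c /\ c ⊑ c ⨾ e.
Proof.
  intros (_ & hb & hc & h) hei.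
  assert (hbc : b = c) by exact (le_subid_comp_r _ _ _ (atom_neq_bot _ _ hb) hei hc h).
  rewrite hbc in h. split; assumption.
Qed.

Lemma Bset_subid_1 a e c :
  Bs (a, e, c) -> e ⊑ idr -> c = conv a /\ conv a ⊑ e ⨾ conv a.
Proof. intros (ha & he & hc & h) hei. exact (subid_atom_le_comp e c a (conj he hei) hc ha h). Qed.

Lemma Bset_subid_2 a b e : Bs (a, b, e) -> e ⊑ idr -> b = a /\ a ⊑ e ⨾ a.
Proof.
  intros (ha & hb & _ & h) hei.
  assert (hba : b = a) by exact (le_subid_comp_l _ _ _ (atom_neq_bot _ _ hb) hei ha h).
  rewrite hba in h. split; assumption.
Qed.

Lemma Bset_subid_third s k l m : k <> l -> k <> m -> l <> m -> Bs s ->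
  comp3 s k ⊑ idr -> comp3 s l ⊑ idr -> comp3 s m ⊑ idr.
Proof.
  destruct s as [[s0 s1] s2]. intros hkl hkm hlm hs.
  destruct k, l, m; try congruence; simpl; intros hk hl;
    first [ destruct (Bset_subid_0 _ _ _ hs hk) as [-> _]
          | destruct (Bset_subid_0 _ _ _ hs hl) as [-> _]
          | destruct (Bset_subid_2 _ _ _ hs hk) as [<- _]
          | destruct (Bset_subid_2 _ _ _ hs hl) as [<- _] ]; assumption.
Qed.

Lemma Trel_subid_unique k m s t : k <> m -> Tr k s t ->
  comp3 s m ⊑ idr -> comp3 t m ⊑ idr -> s = t.
Proof.
  destruct s as [[s0 s1] s2], t as [[t0 t1] t2].
  intros hkm (hs & ht & hk). destruct m; simpl; intros hsm htm.
  - destruct (Bset_subid_0 _ _ _ hs hsm) as [-> hs2], (Bset_subid_0 _ _ _ ht htm) as [-> ht2].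
    assert (s2 = t2) as <- by (destruct k; simpl in hk; congruence).
    rewrite (right_unit_unique s2 s0 t0 (Bset_atom _ i2 hs) (conj (Bset_atom _ i0 hs) hsm)
               (conj (Bset_atom _ i0 ht) htm) hs2 ht2).
    reflexivity.
  - destruct (Bset_subid_1 _ _ _ hs hsm) as [-> hs0], (Bset_subid_1 _ _ _ ht htm) as [-> ht0].
    assert (s0 = t0) as <-.
    { destruct k; simpl in hk; [exact hk | congruence |].
      rewrite <- (convK s0), hk. apply convK. }
    rewrite (left_unit_unique (conv s0) s1 t1 (atom_conv _ (Bset_atom _ i0 hs))
               (conj (Bset_atom _ i1 hs) hsm) (conj (Bset_atom _ i1 ht) htm) hs0 ht0).
    reflexivity.
  - destruct (Bset_subid_2 _ _ _ hs hsm) as [-> hs0], (Bset_subid_2 _ _ _ ht htm) as [-> ht0].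
    assert (s0 = t0) as <- by (destruct k; simpl in hk; congruence).
    rewrite (left_unit_unique s0 s2 t2 (Bset_atom _ i0 hs) (conj (Bset_atom _ i2 hs) hsm)
               (conj (Bset_atom _ i2 ht) htm) hs0 ht0).
    reflexivity.
Qed.

Lemma Eset_diag k s : Es k k s <-> Bs s.
Proof. split; [intros [hs _]; exact hs | intro hs; split; [exact hs | left; reflexivity]]. Qed.

Lemma Eset_distinct k l m s : k <> l -> m <> k -> m <> l ->
  (Es k l s <-> Bs s /\ comp3 s m ⊑ idr).
Proof.
  intros hkl hmk hml. split.
  - intros [hs [hkl' | h]]; [contradiction | split; auto].
  - intros [hs h]. split; [exact hs |]. right. intros j hjk hjl.
    replace j with m by (destruct j, k, l, m; congruence). exact h.
Qed.

Lemma Eset_Trel_unique k l : k <> l -> forall s t, Tr k s t -> Es k l s -> Es k l t -> s = t.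
Proof.
  intros hkl s t hst hs ht. destruct (idx3_third k l hkl) as [m [hmk hml]].
  apply (Eset_distinct k l m s hkl hmk hml) in hs.
  apply (Eset_distinct k l m t hkl hmk hml) in ht.
  exact (Trel_subid_unique k m s t (not_eq_sym hmk) hst (proj2 hs) (proj2 ht)).
Qed.

Section Atomic.

Hypothesis atomic_A : atomic add cmp idr.

Lemma subid_atom_le_comp_conv b : atom b -> exists e, subid_atom e /\ e ⊑ b ⨾ conv b.
Proof.
  intro hb.
  assert (hmeet : meet idr (b ⨾ conv b) <> zero).
  { intro h. apply meet_eq_bot in h.
    apply (atom_neq_bot _ _ (atom_conv b hb)), le_cmp_eq_bot.
    rewrite <- (comp_id_r (conv b)) at 1.
    apply (le_trans _ _ _ (comp_monor _ _ _ h)), tarski. }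
  destruct (atomic_A _ hmeet) as [e [he hle]].
  exists e. split; [split; [exact he |] |]; apply (le_trans _ _ _ hle);
    [apply meet_le_l | apply meet_le_r].
Qed.

Lemma Bset_left_unit a : atom a -> exists e, e ⊑ idr /\ Bs (a, a, e).
Proof.
  intro ha. destruct (subid_atom_le_comp_conv a ha) as [e [[he hei] h]].
  exists e. split; [exact hei |]. apply Bset_intro; try assumption.
  rewrite <- (convK a) at 2. exact (atom_le_comp_conv _ _ _ h (atom_neq_bot _ _ he) ha).
Qed.

Lemma Bset_right_unit a : atom a -> exists e, e ⊑ idr /\ Bs (e, a, a).
Proof.
  intro ha. destruct (subid_atom_le_comp_conv (conv a) (atom_conv a ha)) as [e [[he hei] h]].
  rewrite convK in h. exists e. split; [exact hei |]. apply Bset_intro; try assumption.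
  rewrite <- (convK a) at 2. exact (atom_le_conv_comp _ _ _ h (atom_neq_bot _ _ he) ha).
Qed.

Lemma Bset_conv_pair c : atom c -> exists e, e ⊑ idr /\ Bs (conv c, e, c).
Proof.
  intro hc. destruct (subid_atom_le_comp_conv c hc) as [e [[he hei] h]].
  exists e. split; [exact hei |]. exact (Bset_intro _ _ _ (atom_conv c hc) he hc h).
Qed.

Lemma Bset_diag e : subid_atom e -> Bs (e, e, e).
Proof.
  intros [he hei]. destruct (Bset_left_unit e he) as [f [hfi (_ & _ & hf & h)]].
  assert (e = f) as <-.
  { exact (atom_le_eq _ _ _ (le_trans _ _ _ h (comp_subid_r _ _ hei)) (atom_neq_bot _ _ he) hf). }
  exact (Bset_intro _ _ _ he he he h).
Qed.

Lemma Bset_exists_subid k m y : k <> m -> Bs y ->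
  exists x, Bs x /\ comp3 x k ⊑ idr /\ comp3 x m = comp3 y m.
Proof.
  intros hkm hy. destruct k.
  - destruct (Bset_right_unit _ (Bset_atom y m hy)) as [e [hei hx]].
    exists (e, comp3 y m, comp3 y m).
    split; [exact hx | split; [exact hei | destruct m; [congruence | reflexivity | reflexivity]]].
  - destruct m; [| congruence |].
    + destruct (Bset_conv_pair _ (atom_conv _ (Bset_atom y i0 hy))) as [e [hei hx]].
      rewrite convK in hx. eexists; split; [exact hx | split; [exact hei | reflexivity]].
    + destruct (Bset_conv_pair _ (Bset_atom y i2 hy)) as [e [hei hx]].
      eexists; split; [exact hx | split; [exact hei | reflexivity]].
  - destruct (Bset_left_unit _ (Bset_atom y m hy)) as [e [hei hx]].
    exists (comp3 y m, comp3 y m, e).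
    split; [exact hx | split; [exact hei | destruct m; [reflexivity | reflexivity | congruence]]].
Qed.

Lemma Eset_decomp_diag k m y : k <> m ->
  (Es k k y <-> exists x, Es k m x /\ Es m k x /\ Tr m y x).
Proof.
  intro hkm. destruct (idx3_third k m hkm) as [j [hjk hjm]].
  rewrite Eset_diag. split.
  - intro hy. destruct (Bset_exists_subid j m y hjm hy) as [x [hx [hxj hxm]]].
    exists x. split; [| split].
    + apply (Eset_distinct k m j x hkm hjk hjm). split; assumption.
    + apply (Eset_distinct m k j x (not_eq_sym hkm) hjm hjk). split; assumption.
    + split; [exact hy | split; [exact hx | symmetry; exact hxm]].
  - intros (x & _ & _ & hy & _). exact hy.
Qed.

Lemma Eset_decomp_distinct k l m y : k <> l -> k <> m -> m <> l ->
  (Es k l y <-> exists x, Es k m x /\ Es m l x /\ Tr m y x).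
Proof.
  intros hkl hkm hml.
  rewrite (Eset_distinct k l m y hkl (not_eq_sym hkm) hml). split.
  - intros [hy hym]. remember (comp3 y m) as e eqn:hye.
    assert (hx : Bs (e, e, e)).
    { apply Bset_diag. split; [rewrite hye; apply Bset_atom, hy | exact hym]. }
    assert (he : forall j, comp3 (e, e, e) j = e) by (intro j; destruct j; reflexivity).
    exists (e, e, e). split; [| split].
    + apply (Eset_distinct k m l _ hkm (not_eq_sym hkl) (not_eq_sym hml)).
      rewrite he. split; assumption.
    + apply (Eset_distinct m l k _ hml hkm hkl). rewrite he. split; assumption.
    + split; [exact hy | split; [exact hx | rewrite he; symmetry; exact hye]].
  - intros (x & hx & hxl & hy & _ & hyx).
    apply (Eset_distinct k m l x hkm (not_eq_sym hkl) (not_eq_sym hml)) in hx.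
    apply (Eset_distinct m l k x hml hkm hkl) in hxl.
    split; [exact hy |]. rewrite hyx.
    exact (Bset_subid_third x l k m (not_eq_sym hkl) (not_eq_sym hml) hkm
             (proj1 hx) (proj2 hx) (proj2 hxl)).
Qed.

Lemma Bset_suitable : suitable Bs Tr Es.
Proof.
  split; [| split; [| split; [| split; [| split; [| split; [| split]]]]]].
  - intros k x y (hx & hy & _). split; assumption.
  - intros k l x [hx _]. exact hx.
  - intros k x hx. split; [exact hx | split; [exact hx | reflexivity]].
  - intros k x y (hx & hy & hxy). split; [exact hy | split; [exact hx | symmetry; exact hxy]].
  - intros k x y z (hx & _ & hxy) (_ & hz & hyz).
    split; [exact hx | split; [exact hz | congruence]].
  - exact Eset_diag.
  - intros k l m hkm hml y. destruct (idx3_eq_dec k l) as [<- | hkl].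
    + exact (Eset_decomp_diag k m y hkm).
    + exact (Eset_decomp_distinct k l m y hkl hkm hml).
  - exact Eset_Trel_unique.
Qed.

End Atomic.
End WeaklyAssociative.
End BooleanAlgebra.

Theorem lemma4 (A : Type) (add : A -> A -> A) (cmp : A -> A)
  (comp : A -> A -> A) (conv : A -> A) (idr : A) :
  is_WA add cmp comp conv idr ->
  atomic add cmp idr ->
  suitable (Bset add cmp comp idr) (Trel add cmp comp idr)
           (Eset add cmp comp idr).
Proof.
  intros (addC & addA & huntington & comp_top_top & comp_addl & comp_id_r & convK
          & conv_add & conv_comp & tarski) atomic_A.
  eapply Bset_suitable; eassumption.
Qed.
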